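(* Let $n\ge2$. The Lie algebra $(\mathfrak{sl}_{n+1}(\mathbb C),\mu_\infty)$, where \[\mu_\infty:=[\cdot,\cdot]\big|_{\mathfrak{sl}_n(\mathbb C)\wedge\mathfrak{sl}_n(\mathbb C)}+[\cdot,\cdot]\big|_{\mathfrak{sl}_n(\mathbb C)\wedge\mathfrak s}+\sqrt{\frac{n^2-2}{n(n+1)}}\,\mathrm{Pr}_{\mathbb CI}\circ[\cdot,\cdot]\big|_{\mathfrak s\wedge\mathfrak s},\] is a semi-direct product $\mathfrak{sl}_n(\mathbb C)\ltimes\mathfrak h_{2n+1}$, where $\mathfrak h_{2n+1}$ is the complex Heisenberg Lie algebra (realized as $(\mathbb CI\oplus\mathfrak s,\mu_\infty)$).
   Context: $[\cdot,\cdot]$ is the commutator on $\mathfrak{sl}_{n+1}(\mathbb C)=\mathfrak{sl}_n(\mathbb C)\oplus\mathbb CI\oplus\mathfrak s$, with $\mathfrak{sl}_n(\mathbb C)$ the upper-left $n\times n$ block, $I=\sqrt{\tfrac1{n(n+1)}}\operatorname{diag}(1,\dots,1,-n)$, $\mathfrak s=\operatorname{span}_{\mathbb C}\{e_{i(n+1)},e_{(n+1)i}\}_{i=1}^n$, and $\mathrm{Pr}_{\mathbb CI}$ the orthogonal projection onto $\mathbb CI$ with respect to $\langle X,Y\rangle=\operatorname{tr}(XY^* )$. The complex Heisenberg Lie algebra $\mathfrak h_{2n+1}$ has a basis $X_1,\dots,X_n,Y_1,\dots,Y_n,Z$ whose only nonzero brackets are $[X_i,Y_j]=\delta_{ij}Z$.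 *)

From HB Require Import structures.
From mathcomp Require Import all_boot all_order all_algebra.
From mathcomp Require Import reals complex.
Set Implicit Arguments. Unset Strict Implicit. Unset Printing Implicit Defensive.
Import Order.TTheory GRing.Theory Num.Theory.
Local Open Scope ring_scope.

Section Defs.
Variable C : numClosedFieldType.
Variable n : nat.

Notation M := 'M[C]_(n.+1).

Definition comm (A B : M) : M := A *m B - B *m A.

Definition hs (X Y : M) : C := \tr (X *m (map_mx Num.conj Y)^T).

Definition Imat : M :=
  sqrtC (1 / (n * n.+1)%:R) *:
    \matrix_(i, j) (if i == j then (if i == ord_max then - n%:R else 1) else 0).

Definition PrI (X : M) : M := (hs X Imat / hs Imat Imat) *: Imat.

Definition in_sl (A : M) : Prop := \tr A = 0.
Definition in_sln (A : M) : Prop :=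
  (forall i j : 'I_n.+1, (i == ord_max) || (j == ord_max) -> A i j = 0) /\ \tr A = 0.
(* s = span{e_{i,n+1}, e_{n+1,i}}, i <= n *)
Definition in_s (A : M) : Prop :=
  forall i j : 'I_n.+1, ~~ ((i == ord_max) (+) (j == ord_max)) -> A i j = 0.
Definition in_h (A : M) : Prop := exists (a : C) (S : M), in_s S /\ A = a *: Imat + S.

(* components w.r.t. the (orthogonal) decomposition sl_{n+1} = sl_n + C I + s *)
Definition sPart (A : M) : M :=
  \matrix_(i, j) (if (i == ord_max) (+) (j == ord_max) then A i j else 0).
Definition slnPart (A : M) : M := A - PrI A - sPart A.

Definition cinf : C := sqrtC ((n ^ 2 - 2)%N%:R / (n * n.+1)%N%:R).

(* mu_infinity, bilinear extension of the three restricted pieces *)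
Definition mu_inf (X Y : M) : M :=
  comm (slnPart X) (slnPart Y)
  + comm (slnPart X) (sPart Y) + comm (sPart X) (slnPart Y)
  + cinf *: PrI (comm (sPart X) (sPart Y)).

End Defs.

From HB Require Import structures.
From mathcomp Require Import all_boot all_order all_algebra.
From mathcomp Require Import reals complex.
From mathcomp Require Import ring zify.
Import Order.TTheory GRing.Theory Num.Theory.
Local Open Scope ring_scope.
Set Implicit Arguments. Unset Strict Implicit. Unset Printing Implicit Defensive.

(* Write X = A + a I + S along sl_(n+1) = sl_n + C I + s.  The bracket mu_inf
   only sees the components A and S, sl_n acts on s by the commutator, and [s, s]
   is sent to c_inf times its component along the central line C I.  Jacobi for
   mu_inf thus follows from Jacobi for the commutator together with one
   cancellation: for A in sl_n, Pr_I [S,[T,A]] + Pr_I [T,[A,S]] = - Pr_I [A,[S,T]]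
   = 0, because I commutes with sl_n, so that Pr_I vanishes on [sl_n, gl_(n+1)].
   On C I + s the only nonzero brackets are
   mu(e_(k,n+1), e_(n+1,k)) = c_inf Pr_I (e_kk - e_(n+1,n+1)), one fixed multiple
   Z of I, so C I + s is the Heisenberg algebra with basis e_(k,n+1), e_(n+1,k), Z
   as soon as c_inf <> 0, i.e. n >= 2. *)

(* Module identities between matrices, checked entrywise by [ring]; compound matrix
   subterms have to be generalized first. *)
Ltac mx_ring := apply/matrixP => ? ?; rewrite !mxE; ring.

Lemma mxtrace_delta (R : pzRingType) n (i j : 'I_n) :
  \tr (delta_mx i j : 'M[R]_n) = (i == j)%:R.
Proof.
rewrite /mxtrace (bigD1 i) //= mxE eqxx big1 ?addr0 => [|k /negbTE ki].
  by rewrite eq_sym.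
by rewrite mxE ki.
Qed.

Section Commutator.
Variables (C : numClosedFieldType) (n : nat).
Implicit Types X Y Z : 'M[C]_n.+1.

Lemma commPl a X Y Z : comm (a *: X + Y) Z = a *: comm X Z + comm Y Z.
Proof.
rewrite /comm mulmxDl mulmxDr -scalemxAl -scalemxAr.
move: (X *m Z) (Z *m X) (Y *m Z) (Z *m Y) => P Q S T; mx_ring.
Qed.

Lemma commDr X Y Z : comm X (Y + Z) = comm X Y + comm X Z.
Proof. by rewrite /comm mulmxDl mulmxDr addrACA opprD. Qed.

Lemma comm0l X : comm 0 X = 0.
Proof. by rewrite /comm mul0mx mulmx0 subrr. Qed.

Lemma comm0r X : comm X 0 = 0.
Proof. by rewrite /comm mul0mx mulmx0 subrr. Qed.

Lemma commxx X : comm X X = 0.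
Proof. exact: subrr. Qed.

Lemma comm_skew X Y : comm X Y = - comm Y X.
Proof. by rewrite /comm opprB. Qed.

Definition jacobiator X Y Z :=
  comm X (comm Y Z) + comm Y (comm Z X) + comm Z (comm X Y).

Lemma comm_jacobi X Y Z : jacobiator X Y Z = 0.
Proof.
rewrite /jacobiator /comm !mulmxBr !mulmxBl !mulmxA.
move: (X *m Y *m Z) (X *m Z *m Y) (Y *m X *m Z) (Y *m Z *m X) (Z *m X *m Y)
  (Z *m Y *m X) => a b c d e f; mx_ring.
Qed.

Lemma mxtrace_comm X Y : \tr (comm X Y) = 0.
Proof. by rewrite /comm raddfB /= mxtrace_mulC subrr. Qed.

End Commutator.

Section Decomposition.
Variables (C : numClosedFieldType) (n : nat).
Hypothesis n_gt0 : (0 < n)%N.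
Local Notation M := 'M[C]_n.+1.
Local Notation I := (Imat C n).
Implicit Types (X Y W A B S : M) (a : C).

Definition Iscale : C := sqrtC (1 / (n * n.+1)%:R).

Definition Icoord X : C := Iscale * (\tr X - n.+1%:R * X ord_max ord_max).

Fact Icoord_is_linear : linear_for *%R Icoord.
Proof. by move=> a X Y; rewrite /Icoord linearP !mxE; ring. Qed.
HB.instance Definition _ :=
  GRing.isLinear.Build C M C *%R Icoord Icoord_is_linear.

Fact PrI_is_linear : linear (@PrI C n).
Proof.
move=> a X Y; rewrite /PrI /hs mulmxDl -scalemxAl linearP /=.
by rewrite mulrDl -mulrA scalerDl scalerA.
Qed.
HB.instance Definition _ :=
  GRing.isLinear.Build C M M *:%R (@PrI C n) PrI_is_linear.

Fact sPart_is_linear : linear (@sPart C n).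
Proof. by move=> a X Y; apply/matrixP => i j; rewrite !mxE; case: ifP => _; ring. Qed.
HB.instance Definition _ :=
  GRing.isLinear.Build C M M *:%R (@sPart C n) sPart_is_linear.

Fact slnPart_is_linear : linear (@slnPart C n).
Proof.
move=> a X Y; rewrite /slnPart [PrI _]linearP [sPart _]linearP /=.
move: (PrI X) (PrI Y) (sPart X) (sPart Y) => P Q S T; mx_ring.
Qed.
HB.instance Definition _ :=
  GRing.isLinear.Build C M M *:%R (@slnPart C n) slnPart_is_linear.

Lemma Iscale_sqr : Iscale ^+ 2 * (n * n.+1)%:R = 1.
Proof. by rewrite /Iscale sqrtCK mul1r mulVf // pnatr_eq0 -lt0n muln_gt0 n_gt0. Qed.

Lemma Iscale_neq0 : Iscale != 0.
Proof. by apply: contra_eq_neq Iscale_sqr => ->; rewrite expr0n mul0r eq_sym oner_neq0. Qed.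

Lemma conj_Iscale : Iscale^* = Iscale.
Proof. by apply/conj_Creal/ger0_real; rewrite sqrtC_ge0 divr_ge0 ?ler01 ?ler0n. Qed.

Lemma ImatE i j :
  I i j = Iscale * (if i == j then (if i == ord_max then - n%:R else 1) else 0).
Proof. by rewrite !mxE. Qed.

Lemma mxtrace_Imat : \tr I = 0.
Proof.
rewrite /mxtrace (bigD1_ord ord_max) //= ImatE !eqxx.
under eq_bigr => k _ do rewrite ImatE eqxx lift_eqF.
by rewrite sumr_const card_ord; ring.
Qed.

Lemma hs_Imat X : hs X I = Icoord X.
Proof.
have diagE i : (X *m (map_mx Num.conj I)^T) i i
    = X i i * (Iscale * (if i == ord_max then - n%:R else 1)).
  rewrite mxE (bigD1 i) //= big1 => [|j /negbTE ji]; last first.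
    by rewrite !mxE eq_sym ji mulr0 rmorph0 mulr0.
  rewrite !mxE eqxx rmorphM /= conj_Iscale addr0.
  by case: (i == ord_max); rewrite ?rmorphN ?rmorph_nat ?rmorph1.
rewrite /hs /Icoord /mxtrace; under eq_bigr => i _ do rewrite diagE.
rewrite (bigD1_ord ord_max) //= [\sum_i X i i](bigD1_ord ord_max) //= eqxx.
under eq_bigr => k _ do rewrite lift_eqF mulr1.
rewrite -mulr_suml -natr1; ring.
Qed.

Lemma Icoord_Imat : Icoord I = 1.
Proof.
rewrite /Icoord mxtrace_Imat ImatE !eqxx -[RHS]Iscale_sqr natrM -natr1; ring.
Qed.

Lemma PrIE X : PrI X = Icoord X *: I.
Proof. by rewrite /PrI !hs_Imat Icoord_Imat divr1. Qed.

Lemma in_s0 : in_s (0 : M).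
Proof. by move=> i j; rewrite mxE. Qed.

Lemma in_sN X : in_s X -> in_s (- X).
Proof. by move=> hX i j h; rewrite mxE hX // oppr0. Qed.

Lemma in_sD X Y : in_s X -> in_s Y -> in_s (X + Y).
Proof. by move=> hX hY i j h; rewrite mxE hX // hY // addr0. Qed.

Lemma in_s_sPart X : in_s (sPart X).
Proof. by move=> i j; rewrite mxE => /negbTE ->. Qed.

Lemma sPart_id S : in_s S -> sPart S = S.
Proof. by move=> hS; apply/matrixP => i j; rewrite !mxE; case: ifP => // /negbT /hS. Qed.

Lemma sPart_sln A : in_sln A -> sPart A = 0.
Proof.
case=> hA _; apply/matrixP => i j; rewrite !mxE; case: ifP => // h.
by apply: hA; move: h; case: (i == ord_max); case: (j == ord_max).
Qed.

Lemma sPart_Imat : sPart I = 0.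
Proof.
apply/matrixP => i j; rewrite !mxE.
by case: (eqVneq i j) => [<-|_]; rewrite ?addbb ?mulr0 ?if_same.
Qed.

Lemma mxtrace_s S : in_s S -> \tr S = 0.
Proof. by move=> hS; rewrite /mxtrace big1 // => i _; rewrite hS ?addbb. Qed.

Lemma Icoord_s S : in_s S -> Icoord S = 0.
Proof. by move=> hS; rewrite /Icoord mxtrace_s // hS ?addbb // mulr0 subrr mulr0. Qed.

Lemma Icoord_sln A : in_sln A -> Icoord A = 0.
Proof. by case=> hA htr; rewrite /Icoord htr hA ?eqxx // mulr0 subrr mulr0. Qed.

Lemma in_sln_slnPart X : in_sl X -> in_sln (slnPart X).
Proof.
move=> trX; split; last first.
  rewrite /slnPart !raddfB /= (mxtrace_s (in_s_sPart X)) PrIE linearZ /=.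
  by rewrite mxtrace_Imat trX mulr0 !subr0.
move=> i j ij_max; rewrite /slnPart PrIE !mxE -/Iscale /Icoord trX -natr1.
case: (eqVneq i ord_max) ij_max => [->|i_max]; case: (eqVneq j ord_max) => [->|j_max] //= _.
- have := Iscale_sqr; rewrite natrM -natr1 => Isqr.
  transitivity (X ord_max ord_max * (1 - Iscale ^+ 2 * (n%:R * (n%:R + 1)))); first ring.
  by rewrite Isqr subrr mulr0.
- ring.
- by rewrite (negbTE i_max); ring.
Qed.

Lemma components A a S : in_sln A -> in_s S ->
  [/\ slnPart (A + a *: I + S) = A, PrI (A + a *: I + S) = a *: I
    & sPart (A + a *: I + S) = S].
Proof.
move=> hA hS.
have PrIAS : PrI (A + a *: I + S) = a *: I.
  rewrite PrIE !raddfD /= [Icoord (a *: _)]linearZ /= Icoord_Imat.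
  by rewrite Icoord_sln // Icoord_s // add0r addr0 mulr1.
have sPartAS : sPart (A + a *: I + S) = S.
  rewrite !raddfD /= [sPart (a *: _)]linearZ /= sPart_Imat.
  by rewrite sPart_sln // sPart_id // scaler0 !add0r.
split=> //; rewrite /slnPart PrIAS sPartAS; move: I => J; mx_ring.
Qed.

Lemma in_sln_comm A B : in_sln A -> in_sln B -> in_sln (comm A B).
Proof.
case=> hA _ [hB _]; split; last exact: mxtrace_comm.
move=> i j /orP ij_max; rewrite /comm !mxE !big1 ?subrr // => k _.
  by case: ij_max => /eqP ->; [rewrite hB ?mul0r // eqxx | rewrite hA ?mulr0 // eqxx orbT].
by case: ij_max => /eqP ->; [rewrite hA ?mul0r // eqxx | rewrite hB ?mulr0 // eqxx orbT].
Qed.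

Lemma in_s_comm A S : in_sln A -> in_s S -> in_s (comm A S).
Proof.
case=> hA _ hS i j hij; rewrite /comm !mxE !big1 ?subrr // => k _.
  case Pkj: ((k == ord_max) || (j == ord_max)); first by rewrite hA ?mulr0 // Pkj.
  rewrite hS ?mul0r //; move: Pkj hij.
  by case: (i == ord_max); case: (j == ord_max); case: (k == ord_max).
case Pik: ((i == ord_max) || (k == ord_max)); first by rewrite hA ?mul0r // Pik.
rewrite hS ?mulr0 //; move: Pik hij.
by case: (i == ord_max); case: (j == ord_max); case: (k == ord_max).
Qed.

Lemma in_s_comm_r A S : in_sln A -> in_s S -> in_s (comm S A).
Proof. by move=> hA hS; rewrite comm_skew; apply/in_sN/in_s_comm. Qed.

Lemma Icoord_comm_sln A W : in_sln A -> Icoord (comm A W) = 0.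
Proof.
case=> hA _; rewrite /Icoord mxtrace_comm /comm !mxE.
rewrite !big1 ?subrr ?mulr0 ?sub0r ?oppr0 ?mulr0 //.
  by move=> k _; rewrite hA ?mulr0 // eqxx orbT.
by move=> k _; rewrite hA ?mul0r // eqxx.
Qed.

Lemma Icoord_delta i j : Icoord (delta_mx i j) =
  Iscale * ((i == j)%:R - n.+1%:R * ((i == ord_max) && (j == ord_max))%:R).
Proof. by rewrite /Icoord mxtrace_delta mxE !(eq_sym ord_max). Qed.

Lemma in_sln0 : in_sln (0 : M).
Proof. by split=> [i j _|]; rewrite ?mxE ?mxtrace0. Qed.

Lemma in_h_s S : in_s S -> in_h S.
Proof. by move=> hS; exists 0, S; rewrite scale0r add0r. Qed.

Lemma in_h_Imat a : in_h (a *: I).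
Proof. by exists a, 0; rewrite addr0; split=> //; exact: in_s0. Qed.

Lemma components_h a S : in_s S ->
  [/\ slnPart (a *: I + S) = 0, PrI (a *: I + S) = a *: I & sPart (a *: I + S) = S].
Proof. by move=> hS; have := components a in_sln0 hS; rewrite add0r. Qed.

Lemma PrI_sln A : in_sln A -> PrI A = 0.
Proof. by move=> hA; rewrite PrIE Icoord_sln // scale0r. Qed.

Lemma slnPart_sln A : in_sln A -> slnPart A = A.
Proof. by move=> hA; rewrite /slnPart PrI_sln // sPart_sln // !subr0. Qed.

Lemma slnPart_s S : in_s S -> slnPart S = 0.
Proof. by move=> hS; rewrite /slnPart PrIE Icoord_s // sPart_id // scale0r subr0 subrr. Qed.

End Decomposition.

Section MuInfinity.
Variables (C : numClosedFieldType) (n : nat).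
Hypothesis n_gt0 : (0 < n)%N.
Local Notation M := 'M[C]_n.+1.
Local Notation I := (Imat C n).
Local Notation mu := (@mu_inf C n).
Local Notation c := (cinf C n).
Implicit Types (X Y Z W A B S H : M) (a : C).

Lemma mu_inf_sl X Y : in_sl (mu X Y).
Proof.
by rewrite /in_sl /mu_inf 3!mxtraceD !mxtrace_comm /PrI 2!mxtraceZ mxtrace_Imat !mulr0 !addr0.
Qed.

Lemma mu_infPl a X Y Z : mu (a *: X + Y) Z = a *: mu X Z + mu Y Z.
Proof.
rewrite /mu_inf [slnPart (_ + _)]linearP [sPart (_ + _)]linearP /= !commPl.
rewrite [PrI (_ + _)]linearP /=.
move: (@comm C n) (@PrI C n) => cm P; mx_ring.
Qed.

Lemma mu_inf_xx X : mu X X = 0.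
Proof.
by rewrite /mu_inf !commxx /PrI /hs !mul0mx mxtrace0 !mul0r scale0r scaler0 addr0
  add0r [comm (sPart X) _]comm_skew subrr.
Qed.

Lemma PrI_comm_sln A W : in_sln A -> PrI (comm A W) = 0.
Proof. by move=> hA; rewrite PrIE // Icoord_comm_sln // scale0r. Qed.

Lemma PrI_comm_comm_sln A S T : in_sln A ->
  PrI (comm S (comm T A)) + PrI (comm T (comm A S)) = 0.
Proof.
move=> hA; have := congr1 (@PrI C n) (comm_jacobi A S T).
by rewrite /jacobiator 2!raddfD /= PrI_comm_sln // add0r linear0.
Qed.

Lemma mu_infE X Y : mu X Y = comm (slnPart X) (slnPart Y)
  + (c * Icoord (comm (sPart X) (sPart Y))) *: I
  + (comm (slnPart X) (sPart Y) + comm (sPart X) (slnPart Y)).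
Proof.
rewrite /mu_inf PrIE // scalerA.
move: (comm _ _) (comm (slnPart X) _) (comm _ (slnPart Y)) (_ *: I) => R Q P T.
by rewrite -(addrA P) addrAC.
Qed.

Lemma mu_inf_components X Y : in_sl X -> in_sl Y ->
  slnPart (mu X Y) = comm (slnPart X) (slnPart Y) /\
  sPart (mu X Y) = comm (slnPart X) (sPart Y) + comm (sPart X) (slnPart Y).
Proof.
move=> slX slY; have slnX := in_sln_slnPart n_gt0 slX.
have slnY := in_sln_slnPart n_gt0 slY.
have [] := components n_gt0 (c * Icoord (comm (sPart X) (sPart Y)))
  (in_sln_comm slnX slnY)
  (in_sD (in_s_comm slnX (in_s_sPart Y)) (in_s_comm_r slnY (in_s_sPart X))).
by rewrite -mu_infE => -> _ ->.
Qed.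

Lemma mu_inf_mu_inf X Y Z : in_sl Y -> in_sl Z ->
  mu X (mu Y Z) = comm (slnPart X) (comm (slnPart Y) (slnPart Z))
    + (comm (slnPart X) (comm (slnPart Y) (sPart Z))
       + comm (slnPart X) (comm (sPart Y) (slnPart Z)))
    + comm (sPart X) (comm (slnPart Y) (slnPart Z))
    + c *: (PrI (comm (sPart X) (comm (slnPart Y) (sPart Z)))
            + PrI (comm (sPart X) (comm (sPart Y) (slnPart Z)))).
Proof.
move=> slY slZ; have [slnPartYZ sPartYZ] := mu_inf_components slY slZ.
rewrite {1}/mu_inf slnPartYZ sPartYZ !(commDr _ (comm (slnPart Y) (sPart Z))).
by rewrite raddfD.
Qed.

Lemma mu_inf_jacobi X Y Z : in_sl X -> in_sl Y -> in_sl Z ->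
  mu X (mu Y Z) + mu Y (mu Z X) + mu Z (mu X Y) = 0.
Proof.
move=> slX slY slZ; rewrite !mu_inf_mu_inf //.
have slnX := in_sln_slnPart n_gt0 slX; have slnY := in_sln_slnPart n_gt0 slY.
have slnZ := in_sln_slnPart n_gt0 slZ.
move: (slnPart X) (slnPart Y) (slnPart Z) slnX slnY slnZ => x y z slnX slnY slnZ.
move: (sPart X) (sPart Y) (sPart Z) => s t u.
transitivity (jacobiator x y z + jacobiator x y u + jacobiator y z s + jacobiator z x t
  + c *: ((PrI (comm t (comm u x)) + PrI (comm u (comm x t)))
        + (PrI (comm u (comm s y)) + PrI (comm s (comm y u)))
        + (PrI (comm s (comm t z)) + PrI (comm t (comm z s))))); last first.
  by rewrite !comm_jacobi !PrI_comm_comm_sln // !addr0 scaler0 addr0.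
rewrite /jacobiator; move: (@comm C n) (@PrI C n) => cm P; mx_ring.
Qed.

Lemma mu_inf_s S T : in_s S -> in_s T -> mu S T = c *: PrI (comm S T).
Proof.
move=> hS hT; rewrite /mu_inf !slnPart_s // !sPart_id // !comm0l comm0r.
by rewrite !add0r.
Qed.

Lemma mu_inf_s_Imat S a : in_s S -> mu S (a *: I) = 0.
Proof.
move=> hS; have [slnPartI _ sPartI] := components_h n_gt0 a (@in_s0 C n).
rewrite addr0 in slnPartI sPartI.
rewrite /mu_inf (slnPart_s n_gt0 hS) (sPart_id hS) slnPartI sPartI.
by rewrite !comm0l !comm0r linear0 scaler0 !addr0.
Qed.

Lemma mu_inf_sln A B : in_sln A -> in_sln B -> mu A B = comm A B.
Proof.
move=> hA hB; rewrite /mu_inf !slnPart_sln // !sPart_sln // comm0l !comm0r.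
by rewrite linear0 scaler0 !addr0.
Qed.

Lemma sl_decomposition X : in_sl X -> exists A H, [/\ in_sln A, in_h H & X = A + H].
Proof.
move=> slX; exists (slnPart X), (PrI X + sPart X); split.
- exact: in_sln_slnPart.
- by exists (Icoord X), (sPart X); rewrite -PrIE //; split; first exact: in_s_sPart.
- by rewrite /slnPart -[X - _ - _]addrA -opprD subrK.
Qed.

Lemma sln_h_trivial H : in_sln H -> in_h H -> H = 0.
Proof.
move=> slnH [a [S [hS defH]]].
have [_ PrIH sPartH] := components_h n_gt0 a hS; rewrite -defH in PrIH sPartH.
by rewrite defH -PrIH -sPartH PrI_sln // sPart_sln // addr0.
Qed.

Lemma in_h_sl H : in_h H -> in_sl H.
Proof.
case=> a [S [hS ->]]; rewrite /in_sl mxtraceD (mxtrace_s hS).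
by rewrite [\tr (_ *: I)]mxtraceZ mxtrace_Imat mulr0 addr0.
Qed.

Lemma mu_inf_ideal X H : in_sl X -> in_h H -> in_h (mu X H).
Proof.
move=> slX [a [S [hS ->]]]; have [slnPartH _ sPartH] := components_h n_gt0 a hS.
rewrite /mu_inf slnPartH sPartH !comm0r !addr0 add0r PrIE // scalerA addrC.
by exists (c * Icoord (comm (sPart X) S)), (comm (slnPart X) S); split=> //;
  apply/in_s_comm/hS/in_sln_slnPart.
Qed.

End MuInfinity.

Section Heisenberg.
Variables (C : numClosedFieldType) (n : nat).
Hypothesis n_gt1 : (1 < n)%N.
Let n_gt0 : (0 < n)%N := ltnW n_gt1.
Local Notation M := 'M[C]_n.+1.
Local Notation I := (Imat C n).
Local Notation mu := (@mu_inf C n).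
Local Notation c := (cinf C n).
Implicit Types (S H : M) (a b : 'I_n -> C) (k l : 'I_n).

Definition heisX k : M := delta_mx (lift ord_max k) ord_max.
Definition heisY k : M := delta_mx ord_max (lift ord_max k).
(* mu_inf (heisX k) (heisY k) is c_inf times the component of e_kk - e_(n+1,n+1)
   along I. *)
Definition heis_scale : C := c * Iscale C n * n.+1%:R.
Definition heisZ : M := heis_scale *: I.

Lemma cinf_neq0 : c != 0.
Proof.
rewrite /cinf sqrtC_eq0 mulf_eq0 invr_eq0 !pnatr_eq0 negb_or.
by apply/andP; split; apply/eqP; nia.
Qed.

Lemma heis_scale_neq0 : heis_scale != 0.
Proof. by rewrite !mulf_neq0 ?cinf_neq0 ?Iscale_neq0 ?pnatr_eq0. Qed.

Lemma in_s_heisX k : in_s (heisX k).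
Proof.
move=> i j; rewrite mxE; have [->|//] := eqVneq i (lift ord_max k).
by rewrite lift_eqF /= => /negbTE ->.
Qed.

Lemma in_s_heisY k : in_s (heisY k).
Proof.
move=> i j; rewrite mxE; have [->|_] := eqVneq j (lift ord_max k); last by rewrite andbF.
by rewrite lift_eqF addbF => /negbTE ->.
Qed.

Lemma sum_heisX_entry a i j :
  (\sum_k a k *: heisX k) i j = (j == ord_max)%:R * oapp a 0 (unlift ord_max i).
Proof.
rewrite summxE; case: unliftP => [l ->|->] /=; last first.
  by rewrite big1 ?mulr0 // => k _; rewrite !mxE eq_liftF mulr0.
rewrite (bigD1 l) //= big1 => [|k /negbTE kl]; last first.
  rewrite !mxE; case: eqP => [/lift_inj lk|_]; last by rewrite mulr0.
  by rewrite lk eqxx in kl.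
by rewrite !mxE eqxx addr0 mulrC.
Qed.

Lemma sum_heisY_entry b i j :
  (\sum_k b k *: heisY k) i j = (i == ord_max)%:R * oapp b 0 (unlift ord_max j).
Proof.
rewrite summxE; case: unliftP => [l ->|->] /=; last first.
  by rewrite big1 ?mulr0 // => k _; rewrite !mxE eq_liftF andbF mulr0.
rewrite (bigD1 l) //= big1 => [|k /negbTE kl]; last first.
  rewrite !mxE andbC; case: eqP => [/lift_inj lk|_]; last by rewrite mulr0.
  by rewrite lk eqxx in kl.
by rewrite !mxE eqxx andbT addr0 mulrC.
Qed.

Lemma heisZ_entry i j : heisZ i j =
  heis_scale * Iscale C n * (if i == j then (if i == ord_max then - n%:R else 1) else 0).
Proof. by rewrite mxE ImatE mulrA. Qed.

Lemma in_s_span S : in_s S -> S = \sum_k S (lift ord_max k) ord_max *: heisX k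
                                  + \sum_k S ord_max (lift ord_max k) *: heisY k.
Proof.
move=> hS; apply/matrixP => i j; rewrite mxE sum_heisX_entry sum_heisY_entry.
case: (unliftP ord_max i) => [k ->|->]; case: (unliftP ord_max j) => [l ->|->] /=.
all: rewrite ?eqxx ?lift_eqF /= ?mul0r ?mulr0 ?mul1r ?addr0 ?add0r //.
all: by rewrite hS ?lift_eqF ?eqxx.
Qed.

Lemma heis_independent a b (z : C) :
  \sum_k a k *: heisX k + \sum_k b k *: heisY k + z *: heisZ = 0 ->
  (forall k, a k = 0 /\ b k = 0) /\ z = 0.
Proof.
move=> /matrixP eq0.
have entry i j : (j == ord_max)%:R * oapp a 0 (unlift ord_max i)
    + (i == ord_max)%:R * oapp b 0 (unlift ord_max j) + z * heisZ i j = 0.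
  by have := eq0 i j; rewrite !mxE sum_heisX_entry sum_heisY_entry.
split=> [k|].
  have := entry (lift ord_max k) ord_max; have := entry ord_max (lift ord_max k).
  rewrite !heisZ_entry !liftK unlift_none /= eqxx !lift_eqF eq_liftF /=.
  by rewrite !mulr0 !addr0 !add0r !mul1r => -> ->.
have := entry ord_max ord_max; rewrite heisZ_entry unlift_none /= eqxx !mulr0 !add0r.
have scale_neq0 : heis_scale * Iscale C n * - n%:R != 0.
  apply: mulf_neq0; first exact: mulf_neq0 heis_scale_neq0 (Iscale_neq0 C n_gt0).
  by rewrite oppr_eq0 pnatr_eq0 -lt0n.
by move/eqP; rewrite mulf_eq0 (negbTE scale_neq0) orbF => /eqP.
Qed.

Lemma heis_span H : in_h H -> exists a b (z : C),
  H = \sum_k a k *: heisX k + \sum_k b k *: heisY k + z *: heisZ.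
Proof.
case=> z [S [hS ->]]; rewrite {1}(in_s_span hS) addrC.
exists (fun k => S (lift ord_max k) ord_max), (fun k => S ord_max (lift ord_max k)).
by exists (z / heis_scale); rewrite /heisZ scalerA divfK // heis_scale_neq0.
Qed.

Lemma mu_inf_heisXY k l : mu (heisX k) (heisY l) = (k == l)%:R *: heisZ.
Proof.
rewrite (mu_inf_s n_gt0 (in_s_heisX k) (in_s_heisY l)) PrIE // /comm.
rewrite !mul_delta_mx_cond eqxx mulr1n (inj_eq lift_inj).
rewrite /heisZ [LHS]scalerA [RHS]scalerA; congr (_ *: _).
rewrite raddfB raddfMn /= !Icoord_delta !eqxx !lift_eqF (inj_eq lift_inj) /heis_scale /=.
by case: (eqVneq k l) => _ /=; rewrite ?mulr1n ?mulr0n; ring.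
Qed.

Lemma mu_inf_heisXX k l : mu (heisX k) (heisX l) = 0.
Proof.
rewrite (mu_inf_s n_gt0 (in_s_heisX k) (in_s_heisX l)) /comm !mul_delta_mx_cond.
by rewrite !eq_liftF !mulr0n subrr linear0 scaler0.
Qed.

Lemma mu_inf_heisYY k l : mu (heisY k) (heisY l) = 0.
Proof.
rewrite (mu_inf_s n_gt0 (in_s_heisY k) (in_s_heisY l)) /comm !mul_delta_mx_cond.
by rewrite !lift_eqF !mulr0n subrr linear0 scaler0.
Qed.

Lemma heis_in_h : (forall k, in_h (heisX k) /\ in_h (heisY k)) /\ in_h heisZ.
Proof.
split=> [k|]; last exact: in_h_Imat.
by split; apply: in_h_s; [exact: in_s_heisX | exact: in_s_heisY].
Qed.

Lemma mu_inf_heisZ k : mu (heisX k) heisZ = 0 /\ mu (heisY k) heisZ = 0.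
Proof. by split; apply: (mu_inf_s_Imat n_gt0); [exact: in_s_heisX | exact: in_s_heisY]. Qed.

End Heisenberg.

Theorem lemma3p11 (R : realType) (n : nat) : (2 <= n)%N ->
  let mu := @mu_inf R[i] n in
  let sl := @in_sl R[i] n in
  let sln := @in_sln R[i] n in
  let h := @in_h R[i] n in
  (* (sl_{n+1}(C), mu_inf) is a Lie algebra *)
  [/\ (forall X Y, sl X -> sl Y -> sl (mu X Y)),
      (forall (a : R[i]) X Y Z, sl X -> sl Y -> sl Z ->
          mu (a *: X + Y) Z = a *: mu X Z + mu Y Z),
      (forall X, sl X -> mu X X = 0),
      (forall X Y Z, sl X -> sl Y -> sl Z ->
          mu X (mu Y Z) + mu Y (mu Z X) + mu Z (mu X Y) = 0)
  & (* semidirect product sl_n(C) |x h, h = C I + s *)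
  [/\ (* sl_{n+1} = sl_n (+) h as vector spaces *)
      (forall X, sl X -> exists A H, [/\ sln A, h H & X = A + H]) /\
      (forall X, sln X -> h X -> X = 0),
      (forall X, h X -> sl X),
      (* sl_n is a subalgebra carrying its usual bracket *)
      (forall X Y, sln X -> sln Y -> mu X Y = comm X Y /\ sln (mu X Y)),
      (* h is an ideal *)
      (forall X Y, sl X -> h Y -> h (mu X Y))
    & (* (h, mu) is the Heisenberg Lie algebra h_{2n+1} *)
      exists (Xs Ys : 'I_n -> 'M[R[i]]_(n.+1)) (Z : 'M[R[i]]_(n.+1)),
      [/\ (forall k, h (Xs k) /\ h (Ys k)) /\ h Z,
          (* linear independence *)
          (forall (a b : 'I_n -> R[i]) (c : R[i]),
              \sum_k a k *: Xs k + \sum_k b k *: Ys k + c *: Z = 0 ->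
              (forall k, a k = 0 /\ b k = 0) /\ c = 0),
          (* spanning *)
          (forall H, h H -> exists (a b : 'I_n -> R[i]) (c : R[i]),
              H = \sum_k a k *: Xs k + \sum_k b k *: Ys k + c *: Z),
          (* brackets *)
          (forall k l, mu (Xs k) (Ys l) = (k == l)%:R *: Z /\
                       mu (Xs k) (Xs l) = 0 /\ mu (Ys k) (Ys l) = 0)
        & (forall k, mu (Xs k) Z = 0 /\ mu (Ys k) Z = 0)]]].
Proof.
move=> n_gt1; have n_gt0 : (0 < n)%N := ltnW n_gt1; cbv zeta.
split.
- by move=> X Y _ _; exact: mu_inf_sl.
- by move=> a X Y Z _ _ _; exact: mu_infPl.
- by move=> X _; exact: mu_inf_xx.
- exact: mu_inf_jacobi.
split.
- by split=> X; [exact: sl_decomposition | exact: sln_h_trivial].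
- exact: in_h_sl.
- by move=> X Y slnX slnY; rewrite mu_inf_sln //; split=> //; exact: in_sln_comm.
- exact: mu_inf_ideal.
exists (@heisX R[i] n), (@heisY R[i] n), (@heisZ R[i] n); split.
- exact: heis_in_h.
- exact: heis_independent.
- exact: heis_span.
- by move=> k l; rewrite mu_inf_heisXY // mu_inf_heisXX // mu_inf_heisYY.
- exact: mu_inf_heisZ.
Qed.
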